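(* There is an absolute constant $C$ such that the following holds. Let $0<\epsilon\le1$, let $X\subset\mathbb{R}^2$ be a finite set of points in general position, and let $A\subseteq X$ be an $\epsilon$-approximation for $X$ with respect to the ranges given by wedges (intersections of two closed halfplanes), with $|A|\ge\max(3,1/\epsilon)$. Then for every point $p\in\mathbb{R}^2$ such that $X\cup\{p\}$ is in general position, $|\mathrm{SD}_X(p)-\mathrm{SD}_A(p)|\le C\sqrt{\epsilon}$.
   Context: For a finite set $Y\subset\mathbb{R}^2$ with $|Y|\ge3$ and $p\in\mathbb{R}^2$, the simplicial depth $\mathrm{SD}_Y(p)$ is the fraction, among all $\binom{|Y|}{3}$ triangles formed by convex hulls of 3-element subsets of $Y$, of those triangles that contain $p$. For a finite set $X$ and a family $\mathcal{R}$ of subsets of the plane, $A\subseteq X$ is an $\epsilon$-approximation for $X$ with respect to $\mathcal{R}$ if $\left|\frac{|A\cap R|}{|A|}-\frac{|X\cap R|}{|X|}\right|\le\epsilon$ for every $R\in\mathcal{R}$. *)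

From mathcomp Require Import all_boot all_order all_algebra.
From mathcomp Require Import boolp reals.
Set Implicit Arguments. Unset Strict Implicit. Unset Printing Implicit Defensive.
Import Order.TTheory GRing.Theory Num.Theory.
Local Open Scope ring_scope.

Section Defs.
Variable R : realType.

Definition point := (R * R)%type.

Definition orient (x y z : point) : R :=
  (y.1 - x.1) * (z.2 - x.2) - (y.2 - x.2) * (z.1 - x.1).

Definition gen_pos (S : seq point) : Prop :=
  forall x y z, x \in S -> y \in S -> z \in S ->
    x != y -> y != z -> x != z -> orient x y z != 0.

Record halfplane := Halfplane { hp_a : R; hp_b : R; hp_c : R }.
Definition proper_hp (h : halfplane) : Prop := (hp_a h != 0) || (hp_b h != 0).
Definition in_hp (h : halfplane) (q : point) : bool :=
  hp_a h * q.1 + hp_b h * q.2 <= hp_c h.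

Definition in_wedge (h1 h2 : halfplane) (q : point) : bool :=
  in_hp h1 q && in_hp h2 q.

Definition freq (P : pred point) (Y : seq point) : R :=
  (count P Y)%:R / (size Y)%:R.

Definition eps_approx_wedges (eps : R) (A X : seq point) : Prop :=
  forall h1 h2 : halfplane, proper_hp h1 -> proper_hp h2 ->
    `| freq (in_wedge h1 h2) A - freq (in_wedge h1 h2) X | <= eps.

Definition in_triangle (x y z p : point) : Prop :=
  exists a b c : R, [/\ 0 <= a, 0 <= b, 0 <= c & a + b + c = 1] /\
    p.1 = a * x.1 + b * y.1 + c * z.1 /\ p.2 = a * x.2 + b * y.2 + c * z.2.

Definition SD (Y : seq point) (p : point) : R :=
  let n := size Y in
  (\sum_(i < n) \sum_(j < n) \sum_(k < n)
     (if ((i < j) && (j < k))%N && `[< in_triangle (nth (0,0) Y i)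
                                    (nth (0,0) Y j) (nth (0,0) Y k) p >]
      then 1 else 0)) / ('C(n, 3))%:R.

End Defs.

(* For fixed distinct y and z the points x whose triangle xyz contains p form a
   wedge with apex p, bounded by the lines pz and py on the side opposite to y and z
   (if p, y, z are collinear, general position forces p to be y or z, and then every
   triangle contains p).  Draw the three vertices independently, each uniformly from
   X or from A, and count triangles with distinct vertices containing p.  Changing
   the distribution of the first vertex from A to X changes this density by at most
   eps plus O(1/|A|) for the two excluded points x = y, z; by symmetry of the count,
   three such changes lead from A to X, and each of the two extreme densities is
   within O(1/n) of the simplicial depth, repeated vertices being that rare.  Since
   1/|A| <= eps this gives |SD_X(p) - SD_A(p)| <= 21 eps <= 21 sqrt eps. *)

From mathcomp Require Import all_boot all_order all_algebra.
From mathcomp Require Import boolp reals ring lra zify.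
Set Implicit Arguments. Unset Strict Implicit. Unset Printing Implicit Defensive.
Import Order.TTheory GRing.Theory Num.Theory.

Lemma ffact3 n : n ^_ 3 = n * n.-1 * n.-2.
Proof. by rewrite !ffactnS ffactn0 muln1 mulnA. Qed.

Lemma ffact3_expn3 n : n ^_ 3 <= n ^ 3 <= n ^_ 3 + 3 * n ^ 2.
Proof. by rewrite ffact3; case: n => [|[|[|n]]] //; apply/andP; split; nia. Qed.

Lemma distinct_orderings (i j k : nat) :
  [&& i != j, j != k & i != k] =
  ((i < j < k) + (i < k < j) + (j < i < k) + (j < k < i) + (k < i < j) + (k < j < i))%N
  :> nat.
Proof. by case: (ltngtP i j); case: (ltngtP j k); case: (ltngtP i k); lia. Qed.

Section OrdinalTriples.
Variable n : nat.

Lemma sum_neq2 (i j : 'I_n) : i != j -> \sum_(k < n) ((j != k) && (i != k)) = n.-2.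
Proof.
move=> ij; rewrite -big_mkcond /= sum1_card.
transitivity #|~: [set i; j]|.
  by apply: eq_card => k; rewrite !inE negb_or !(eq_sym k) andbC.
by have := cardsC [set i; j]; rewrite cards2 ij card_ord; lia.
Qed.

Lemma sum3_distinct :
  \sum_(i < n) \sum_(j < n) \sum_(k < n) [&& i != j, j != k & i != k] = n ^_ 3.
Proof.
transitivity (\sum_(i < n) \sum_(j < n) (i != j) * n.-2).
  apply: eq_bigr => i _; apply: eq_bigr => j _.
  have [<-|ij] := eqVneq i j; first by rewrite big1.
  by rewrite mul1n -(sum_neq2 ij).
have card_neq (i : 'I_n) : #|[pred j | i != j]| = n.-1.
  transitivity #|predC1 i|; last by rewrite cardC1 card_ord.
  by apply: eq_card => j; rewrite !inE eq_sym.
under eq_bigr do rewrite -big_distrl /= -big_mkcond /= sum1_card card_neq.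
by rewrite sum_nat_const card_ord ffact3 mulnA.
Qed.

End OrdinalTriples.

Local Open Scope ring_scope.

Section Triangle.
Variable R : realType.
Implicit Types (k : R) (p q x y z : point R).

Lemma orient_rot x y z : orient y z x = orient x y z.
Proof. by rewrite /orient; ring. Qed.

Lemma orient_eq0_12 x z : orient x x z = 0.
Proof. by rewrite /orient !subrr !mul0r subrr. Qed.

Definition sign_hp k x y : halfplane R :=
  Halfplane (k * (y.2 - x.2)) (- (k * (y.1 - x.1)))
            (k * (y.2 - x.2) * x.1 - k * (y.1 - x.1) * x.2).

Lemma in_sign_hp k x y q : in_hp (sign_hp k x y) q = (0 <= k * orient x y q).
Proof. by rewrite /in_hp /= -subr_ge0; congr (0 <= _); rewrite /orient; ring. Qed.

Lemma sign_hp_proper k x y : k != 0 -> x != y -> proper_hp (sign_hp k x y).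
Proof.
move=> k0; rewrite /proper_hp /= oppr_eq0 !mulf_eq0 (negbTE k0) /= !subr_eq0.
case: x y => [x1 x2] [y1 y2].
by rewrite xpair_eqE negb_and orbC !(eq_sym y1) !(eq_sym y2).
Qed.

Lemma in_triangle_swap12 x y z p : in_triangle x y z p -> in_triangle y x z p.
Proof.
move=> [a [b [c [[a0 b0 c0 abc] [e1 e2]]]]].
exists b, a, c; split; first by split => //; lra.
by split; [rewrite e1 | rewrite e2]; ring.
Qed.

Lemma in_triangle_swap23 x y z p : in_triangle x y z p -> in_triangle x z y p.
Proof.
move=> [a [b [c [[a0 b0 c0 abc] [e1 e2]]]]].
exists a, c, b; split; first by split => //; lra.
by split; [rewrite e1 | rewrite e2]; ring.
Qed.

Lemma in_triangle_vertex y z p : in_triangle p y z p.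
Proof. by exists 1, 0, 0; split; [split => //; lra | split; ring]. Qed.

Lemma orient_convex a b c x y z p : a + b + c = 1 ->
  p.1 = a * x.1 + b * y.1 + c * z.1 -> p.2 = a * x.2 + b * y.2 + c * z.2 ->
  orient p y z = a * orient x y z.
Proof.
move=> abc e1 e2; rewrite /orient e1 e2.
have -> : c = 1 - a - b by lra.
by ring.
Qed.

Lemma in_triangle_orient_ge0 x y z p : in_triangle x y z p ->
  (0 <= orient p y z * orient p z x) && (0 <= orient p y z * orient p x y).
Proof.
move=> [a [b [c [[a0 b0 c0 abc] [e1 e2]]]]].
have eD : orient p y z = a * orient x y z by apply: orient_convex e1 e2.
have eF : orient p z x = b * orient x y z.
  rewrite -(orient_rot x y z).
  by apply: (@orient_convex b c a y z x p); [lra | rewrite e1 | rewrite e2]; ring.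
have eG : orient p x y = c * orient x y z.
  rewrite -(orient_rot x y z) -(orient_rot y z x).
  by apply: (@orient_convex c a b z x y p); [lra | rewrite e1 | rewrite e2]; ring.
have nn u v : 0 <= u -> 0 <= v -> 0 <= u * orient x y z * (v * orient x y z).
  move=> u0 v0; rewrite mulrACA -expr2.
  by apply: mulr_ge0; [exact: mulr_ge0 | exact: sqr_ge0].
by rewrite eD eF eG !nn.
Qed.

Lemma in_triangle_weights (u v w : R) x y z p : u != 0 -> 0 <= u * v -> 0 <= u * w ->
  u * x.1 + v * y.1 + w * z.1 = (u + v + w) * p.1 ->
  u * x.2 + v * y.2 + w * z.2 = (u + v + w) * p.2 ->
  in_triangle x y z p.
Proof.
move=> u0 uv uw e1 e2; set t := u + v + w in e1 e2.
have uu : 0 < u * u by rewrite lt0r mulf_neq0 //= -expr2 sqr_ge0.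
have ut : 0 < u * t by rewrite /t !mulrDr; lra.
have t0 : t != 0 by apply: contraTneq ut => ->; rewrite mulr0 ltxx.
have ge0 r : 0 <= u * r -> 0 <= r / t.
  by move=> ur; rewrite -(pmulr_rge0 _ ut) mulrACA mulfV // mulr1.
exists (u / t), (v / t), (w / t); split.
  by split; [apply/ge0/ltW | apply: ge0 | apply: ge0 | rewrite -!mulrDl divff].
by split; rewrite !(mulrAC _ t^-1) -!mulrDl ?e1 ?e2 mulrC mulKf.
Qed.

(* The converse direction rests on the barycentric identity
   [orient p y z * x + orient p z x * y + orient p x y * z = orient x y z * p]. *)
Lemma in_triangle_orient x y z p : orient p y z != 0 ->
  in_triangle x y z p <->
  (0 <= orient p y z * orient p z x) && (0 <= orient p y z * orient p x y).
Proof.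
move=> D0; split; first exact: in_triangle_orient_ge0.
case/andP=> DF DG; apply: (in_triangle_weights D0 DF DG); rewrite /orient; ring.
Qed.

Definition cone p y z : pred (point R) :=
  if orient p y z != 0
  then in_wedge (sign_hp (orient p y z) p z) (sign_hp (orient p y z) y p)
  else predT.

Lemma cone_wedge p y z : orient p y z != 0 ->
  exists h1 h2, [/\ proper_hp h1, proper_hp h2 & cone p y z =1 in_wedge h1 h2].
Proof.
move=> D0; exists (sign_hp (orient p y z) p z), (sign_hp (orient p y z) y p).
split=> [||x]; last by rewrite /cone D0.
- apply: sign_hp_proper => //; apply: contraNneq D0 => <-.
  by rewrite orient_rot orient_eq0_12.
- by apply: sign_hp_proper => //; apply: contraNneq D0 => ->; rewrite orient_eq0_12.
Qed.

Lemma in_triangle_cone (S : seq (point R)) p x y z : gen_pos (p :: S) ->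
  y \in S -> z \in S -> y != z -> in_triangle x y z p <-> cone p y z x.
Proof.
move=> gp yS zS yz; rewrite /cone; case: ifPn => [D0 | /negPn /eqP D0].
  rewrite /in_wedge !in_sign_hp (orient_rot x y p) (orient_rot p x y).
  exact: in_triangle_orient.
split=> // _.
have [-> | yp] := eqVneq y p; first exact/in_triangle_swap12/in_triangle_vertex.
have [-> | zp] := eqVneq z p.
  exact/in_triangle_swap23/in_triangle_swap12/in_triangle_vertex.
have := gp p y z; rewrite !inE eqxx yS zS !orbT D0 eqxx eq_sym yp yz eq_sym zp.
by move=> /(_ isT isT isT isT isT isT).
Qed.

Definition covers p x y z : bool :=
  [&& x != y, y != z, x != z & `[< in_triangle x y z p >]].

Lemma covers_swap12 p x y z : covers p x y z = covers p y x z.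
Proof.
have tri : `[< in_triangle x y z p >] = `[< in_triangle y x z p >].
  by apply: asbool_equiv_eq; split; apply: in_triangle_swap12.
by rewrite /covers tri eq_sym; case: (x != y); case: (y != z); case: (x != z).
Qed.

Lemma covers_swap23 p x y z : covers p x y z = covers p x z y.
Proof.
have tri : `[< in_triangle x y z p >] = `[< in_triangle x z y p >].
  by apply: asbool_equiv_eq; split; apply: in_triangle_swap23.
by rewrite /covers tri (eq_sym y); case: (x != y); case: (z != y); case: (x != z).
Qed.

Lemma covers_cone (S : seq (point R)) p x y z : gen_pos (p :: S) ->
  y \in S -> z \in S -> y != z -> covers p x y z = [&& x != y, x != z & cone p y z x].
Proof.
move=> gp yS zS yz.
by rewrite /covers (asbool_equiv_eqP idP (in_triangle_cone x gp yS zS yz)) yz.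
Qed.

End Triangle.

Section Means.
Variables (R : numFieldType) (T : eqType).
Implicit Types (s t : seq T) (f g h : T -> R).

Definition mean s f : R := (\sum_(x <- s) f x) / (size s)%:R.

Lemma mean_const s (c : R) : size s != 0%N -> mean s (fun=> c) = c.
Proof.
move=> s0; rewrite /mean big_const_seq count_predT iter_addr_0.
by rewrite -[c *+ _]mulr_natr mulfK ?pnatr_eq0.
Qed.

Lemma eq_mean s f g : f =1 g -> mean s f = mean s g.
Proof. by move=> fg; rewrite /mean (eq_bigr _ (fun x _ => fg x)). Qed.

Lemma meanD s f g : mean s (fun x => f x + g x) = mean s f + mean s g.
Proof. by rewrite /mean big_split mulrDl. Qed.

Lemma mean_exchange s t (F : T -> T -> R) :
  mean s (fun x => mean t (F x)) = mean t (fun y => mean s (F^~ y)).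
Proof. by rewrite /mean -!mulr_suml exchange_big -!mulrA [_^-1 * _^-1]mulrC. Qed.

Lemma ler_mean_dist s f g h : {in s, forall x, `|f x - g x| <= h x} ->
  `|mean s f - mean s g| <= mean s h.
Proof.
move=> fgh; rewrite /mean -mulrBl -sumrB normrM [`|_^-1|]ger0_norm ?invr_ge0 //.
rewrite ler_wpM2r ?invr_ge0 // big_seq_cond [leRHS]big_seq_cond.
by apply: le_trans (ler_norm_sum _ _ _) (ler_sum _ _) => x /andP [/fgh].
Qed.

End Means.

Section Frequencies.
Variable R : realType.
Implicit Types (s : seq (point R)) (P : pred (point R)).

Lemma mean_indicator s P : mean s (fun x => (P x)%:R) = freq P s.
Proof.
rewrite /mean /freq -sum1_count natr_sum [in RHS]big_mkcond; congr (_ / _).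
by apply: eq_bigr => x _; case: (P x).
Qed.

Lemma freq_pred1 s y : uniq s -> freq (pred1 y) s <= (size s)%:R^-1.
Proof.
move=> us; rewrite /freq -[leRHS]mul1r ler_wpM2r ?invr_ge0 // lern1.
by rewrite count_uniq_mem // leq_b1.
Qed.

Lemma freq_drop2 s P y z : uniq s ->
  `|freq (fun x => [&& x != y, x != z & P x]) s - freq P s| <= 2 / (size s)%:R.
Proof.
move=> us; rewrite -!mean_indicator.
apply: le_trans (ler_mean_dist (h := fun x => (x == y)%:R + (x == z)%:R) _) _.
  move=> x _; case: (x == y); case: (x == z); case: (P x);
  by rewrite /= ?mulr1n ?mulr0n ?(subrr, subr0, sub0r, normrN, normr1, normr0); lra.
rewrite meanD !(mean_indicator _ (pred1 _)) -[2]/(1 + 1) mulrDl mul1r.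
by rewrite lerD ?freq_pred1.
Qed.

Definition mean3 (S1 S2 S3 : seq (point R)) (F : point R -> point R -> point R -> bool)
    : R :=
  mean S1 (fun x => mean S2 (fun y => mean S3 (fun z => (F x y z)%:R))).

Section Mean3.
Variable F : point R -> point R -> point R -> bool.

Lemma mean3_swap12 S1 S2 S3 : (forall x y z, F x y z = F y x z) ->
  mean3 S1 S2 S3 F = mean3 S2 S1 S3 F.
Proof.
move=> FC; rewrite /mean3 mean_exchange.
by apply: eq_mean => y; apply: eq_mean => x; apply: eq_mean => z; rewrite FC.
Qed.

Lemma mean3_swap23 S1 S2 S3 : (forall x y z, F x y z = F x z y) ->
  mean3 S1 S2 S3 F = mean3 S1 S3 S2 F.
Proof.
move=> FC; rewrite /mean3; apply: eq_mean => x; rewrite mean_exchange.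
by apply: eq_mean => z; apply: eq_mean => y; rewrite FC.
Qed.

Lemma mean3_freq S1 S2 S3 :
  mean3 S1 S2 S3 F = mean S2 (fun y => mean S3 (fun z => freq (fun x => F x y z) S1)).
Proof.
rewrite /mean3 mean_exchange; apply: eq_mean => y.
by rewrite mean_exchange; apply: eq_mean => z; rewrite mean_indicator.
Qed.

Lemma ler_mean3_dist A X S2 S3 (d : R) : size S2 != 0%N -> size S3 != 0%N ->
  (forall y z, y \in S2 -> z \in S3 ->
     `|freq (fun x => F x y z) A - freq (fun x => F x y z) X| <= d) ->
  `|mean3 A S2 S3 F - mean3 X S2 S3 F| <= d.
Proof.
move=> S20 S30 Fd; rewrite !mean3_freq -(mean_const d S20).
apply: ler_mean_dist => y yS2; rewrite -(mean_const d S30).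
by apply: ler_mean_dist => z zS3; apply: Fd.
Qed.

End Mean3.

End Frequencies.

Section TripleSums.
Variables (R : pzRingType) (n : nat).
Implicit Types g h : 'I_n -> 'I_n -> 'I_n -> R.

Definition sum3 g : R := \sum_(i < n) \sum_(j < n) \sum_(k < n) g i j k.

Lemma eq_sum3 g h : (forall i j k, g i j k = h i j k) -> sum3 g = sum3 h.
Proof. by move=> gh; do 3!(apply: eq_bigr => ? _). Qed.

Lemma sum3D g h : sum3 (fun i j k => g i j k + h i j k) = sum3 g + sum3 h.
Proof.
rewrite /sum3 -big_split; apply: eq_bigr => i _.
by rewrite -big_split; apply: eq_bigr => j _; rewrite -big_split.
Qed.

Lemma sum3_swap12 g : sum3 g = sum3 (fun i j k => g j i k).
Proof. exact: exchange_big. Qed.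

Lemma sum3_swap23 g : sum3 g = sum3 (fun i j k => g i k j).
Proof. by apply: eq_bigr => i _; rewrite exchange_big. Qed.

Lemma sum3_symmetric g :
  (forall i j k, g i j k = g j i k) -> (forall i j k, g i j k = g i k j) ->
  (forall i j k, g i j k != 0 -> [&& i != j, j != k & i != k]) ->
  sum3 g = 6 * sum3 (fun i j k => (i < j < k)%N%:R * g i j k).
Proof.
move=> g12 g23 g_distinct; set o := fun i j k => _.
have g_orderings i j k :
    g i j k = o i j k + o i k j + o j i k + o j k i + o k i j + o k j i.
  have e1 : g i k j = g i j k by rewrite (g23 i j k).
  have e2 : g j i k = g i j k by rewrite (g12 i j k).
  have e3 : g j k i = g i j k by rewrite (g12 i j k) (g23 j i k).
  have e4 : g k i j = g i j k by rewrite (g23 i j k) (g12 i k j).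
  have e5 : g k j i = g i j k by rewrite (g12 i j k) (g23 j i k) (g12 j k i).
  rewrite /o e1 e2 e3 e4 e5 -!mulrDl -!natrD -distinct_orderings.
  by have [->|/g_distinct ->] := eqVneq (g i j k) 0; rewrite ?mulr0 ?mulr1n ?mul1r.
have s1 : sum3 (fun i j k => o i k j) = sum3 o by rewrite -sum3_swap23.
have s2 : sum3 (fun i j k => o j i k) = sum3 o by rewrite -sum3_swap12.
have s3 : sum3 (fun i j k => o j k i) = sum3 o.
  by rewrite (sum3_swap12 (fun i j k => o j k i)) -sum3_swap23.
have s4 : sum3 (fun i j k => o k i j) = sum3 o.
  by rewrite (sum3_swap23 (fun i j k => o k i j)) -sum3_swap12.
have s5 : sum3 (fun i j k => o k j i) = sum3 o.
  by rewrite (sum3_swap12 (fun i j k => o k j i)) s4.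
rewrite (eq_sum3 g_orderings) !sum3D s1 s2 s3 s4 s5.
by rewrite mulr_natl !mulrS mulr0n addr0 !addrA.
Qed.

End TripleSums.

Lemma ler_dist_div (R : realFieldType) (s m M : R) :
  0 <= s <= m -> m <= M -> `|s / m - s / M| <= 1 - m / M.
Proof.
move=> /andP [s0 sm] mM; have [m0 | m_gt0] := eqVneq m 0.
  have -> : s = 0 by apply/le_anti; rewrite s0 -m0 sm.
  by rewrite m0 !mul0r subrr normr0 subr0 ler01.
have m_pos : 0 < m by rewrite lt0r m_gt0 (le_trans s0).
have M_pos : 0 < M by apply: lt_le_trans mM.
have -> : s / M = s / m * (m / M) by rewrite mulrA divfK.
have r0 : 0 <= s / m by rewrite divr_ge0 // ltW.
have r1 : s / m <= 1 by rewrite ler_pdivrMr // mul1r.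
have q0 : 0 <= m / M by rewrite divr_ge0 // ltW.
have q1 : m / M <= 1 by rewrite ler_pdivrMr // mul1r.
rewrite ger0_norm; first by nra.
by rewrite -{1}[s / m]mulr1 -mulrBr mulr_ge0 // subr_ge0.
Qed.

Section Depth.
Variable R : realType.
Implicit Types (p : point R) (Y : seq (point R)).

Lemma mean_nth Y (f : point R -> R) :
  mean Y f = (\sum_(i < size Y) f (nth (0, 0) Y i)) / (size Y)%:R.
Proof. by rewrite /mean (big_nth (0, 0)) big_mkord. Qed.

Lemma mean3_sum3 Y (F : point R -> point R -> point R -> bool) : mean3 Y Y Y F =
  sum3 (fun i j k : 'I_(size Y) =>
          (F (nth (0, 0) Y i) (nth (0, 0) Y j) (nth (0, 0) Y k))%:R)
  / (size Y)%:R ^+ 3.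
Proof.
rewrite /mean3 mean_nth.
under eq_bigr => i _ do rewrite mean_nth.
under eq_bigr => i _ do under eq_bigr => j _ do rewrite mean_nth.
under eq_bigr => i _ do rewrite -mulr_suml.
by rewrite -!mulr_suml -!mulrA -!invfM -expr2 -exprS.
Qed.

Lemma covers_nth_distinct p Y (i j k : 'I_(size Y)) :
  covers p (nth (0, 0) Y i) (nth (0, 0) Y j) (nth (0, 0) Y k) ->
  [&& i != j, j != k & i != k].
Proof.
move=> /and4P [xy yz xz _]; apply/and3P.
by split; [apply: contraNneq xy | apply: contraNneq yz | apply: contraNneq xz] => ->.
Qed.

(* Also for [size Y < 3], where both sides are a division by [0]. *)
Lemma SD_sum3 p Y : uniq Y -> SD Y p =
  sum3 (fun i j k : 'I_(size Y) =>
          (covers p (nth (0, 0) Y i) (nth (0, 0) Y j) (nth (0, 0) Y k))%:R)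
  / (size Y ^_ 3)%:R.
Proof.
move=> uY; rewrite sum3_symmetric; first last.
- by move=> i j k; rewrite pnatr_eq0 eqb0 negbK => /covers_nth_distinct.
- by move=> i j k; rewrite covers_swap23.
- by move=> i j k; rewrite covers_swap12.
rewrite -bin_ffact natrM (_ : (3`!)%:R = 6 :> R) // [_ * 6]mulrC invfM mulrACA.
rewrite divff ?pnatr_eq0 // mul1r /SD /=; congr (_ / _).
apply: eq_bigr => i _; apply: eq_bigr => j _; apply: eq_bigr => k _.
case ijk: (i < j < k)%N; rewrite /= ?mulr0n ?mul0r // mulr1n mul1r.
have /andP [ij jk] := ijk.
rewrite /covers !nth_uniq // (ltn_eqF ij) (ltn_eqF jk) (ltn_eqF (ltn_trans ij jk)) /=.
by case: `[< _ >].
Qed.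

Lemma SD_mean3_dist p Y : uniq Y -> size Y != 0%N ->
  `|SD Y p - mean3 Y Y Y (covers p)| <= 3 / (size Y)%:R.
Proof.
move=> uY Y0; rewrite SD_sum3 // mean3_sum3; set s := sum3 _.
have n_pos : 0 < (size Y)%:R :> R by rewrite ltr0n lt0n.
have [ffact_le gap] := andP (ffact3_expn3 (size Y)).
have s_bound : 0 <= s <= (size Y ^_ 3)%:R.
  rewrite -sum3_distinct /s /sum3 !natr_sum sumr_ge0 => [|i _]; last first.
    by apply: sumr_ge0 => j _; apply: sumr_ge0.
  apply: ler_sum => i _; rewrite natr_sum; apply: ler_sum => j _; rewrite natr_sum.
  apply: ler_sum => k _; rewrite ler_nat.
  by case cov: covers => //; rewrite (covers_nth_distinct cov).
apply: le_trans (ler_dist_div s_bound _) _; first by rewrite -natrX ler_nat.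
have M0 : (size Y)%:R ^+ 3 != 0 :> R by rewrite expf_neq0 // gt_eqF.
rewrite -[X in X - _](divff M0) -mulrBl ler_pdivrMr ?exprn_gt0 //.
rewrite [in leRHS]exprS mulrA divfK ?gt_eqF // lerBlDr -!natrX -natrM -natrD ler_nat.
by rewrite addnC.
Qed.

End Depth.

Lemma ler_sqrtr_self (R : rcfType) (x : R) : 0 <= x -> x <= 1 -> x <= Num.sqrt x.
Proof.
move=> x0 x1; have s1 : Num.sqrt x <= 1 by rewrite -sqrtr1 ler_sqrt.
by rewrite -{1}(sqr_sqrtr x0) expr2 ler_piMl ?sqrtr_ge0.
Qed.

Section Approximation.
Variables (R : realType) (eps : R) (p : point R) (A X : seq (point R)).
Hypotheses (eps_ge0 : 0 <= eps) (uA : uniq A) (uX : uniq X).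
Hypotheses (A0 : size A != 0%N) (X0 : size X != 0%N).
Hypotheses (gpX : gen_pos (p :: X)) (approx : eps_approx_wedges eps A X).

Lemma cone_freq_approx y z : `|freq (cone p y z) A - freq (cone p y z) X| <= eps.
Proof.
have [D0|D0] := boolP (orient p y z != 0).
  by have [h1 [h2 [hp1 hp2 e]]] := cone_wedge D0; rewrite /freq !(eq_count e) approx.
by rewrite /cone (negbTE D0) /freq /= !count_predT !divff ?subrr ?normr0 ?pnatr_eq0.
Qed.

Lemma covers_freq_approx y z : y \in X -> z \in X ->
  `|freq (fun x => covers p x y z) A - freq (fun x => covers p x y z) X|
    <= eps + 2 / (size A)%:R + 2 / (size X)%:R.
Proof.
move=> yX zX; have [<-|yz] := eqVneq y z.
  have e : (fun x => covers p x y y) =1 pred0 by move=> x; rewrite /covers eqxx andbF.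
  rewrite /freq !(eq_count e) !count_pred0 mulr0n !mul0r subrr normr0.
  by apply: addr_ge0; [apply: addr_ge0 |]; rewrite // divr_ge0.
have e : (fun x => covers p x y z) =1 (fun x => [&& x != y, x != z & cone p y z x]).
  by move=> x; exact: covers_cone gpX yX zX yz.
rewrite /freq !(eq_count e) -!/(freq _ _).
have := freq_drop2 (cone p y z) y z uA; have := freq_drop2 (cone p y z) y z uX.
have := cone_freq_approx y z; rewrite !ler_norml.
by move=> /andP [c1 c2] /andP [x1 x2] /andP [a1 a2]; apply/andP; split; lra.
Qed.

Lemma mean3_covers_approx S2 S3 : {subset S2 <= X} -> {subset S3 <= X} ->
  size S2 != 0%N -> size S3 != 0%N ->
  `|mean3 A S2 S3 (covers p) - mean3 X S2 S3 (covers p)|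
    <= eps + 2 / (size A)%:R + 2 / (size X)%:R.
Proof.
move=> sS2 sS3 S20 S30; apply: ler_mean3_dist => // y z yS2 zS3.
by apply: covers_freq_approx; [apply: sS2 | apply: sS3].
Qed.

End Approximation.

Theorem mainTheorem5 (R : realType) :
  exists C : R, forall (eps : R) (X A : seq (point R)),
    0 < eps -> eps <= 1 ->
    uniq X -> gen_pos X ->
    uniq A -> {subset A <= X} ->
    eps_approx_wedges eps A X ->
    (3 <= size A)%N -> eps^-1 <= (size A)%:R ->
    forall p : point R, gen_pos (p :: X) ->
      `| SD X p - SD A p | <= C * Num.sqrt eps.
Proof.
exists 21 => eps X A eps_gt0 eps_le1 uX _ uA sAX approx A3 epsA p gpX.
have AX : (size A <= size X)%N := uniq_leq_size uA sAX.
have A0 : size A != 0%N by rewrite -lt0n (leq_trans _ A3).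
have X0 : size X != 0%N by rewrite -lt0n (leq_trans _ (leq_trans A3 AX)).
have step := mean3_covers_approx (ltW eps_gt0) uA uX A0 X0 gpX approx.
have sXX : {subset X <= X} by [].
have dA := SD_mean3_dist p uA A0; have dX := SD_mean3_dist p uX X0.
(* Switch one sampled set at a time: AAA, XAA = AXA, XXA = AXX, XXX. *)
have d1 := step A A sAX sAX A0 A0.
have d2 := step X A sXX sAX X0 A0.
have d3 := step X X sXX sXX X0 X0.
rewrite -(mean3_swap12 X A A (covers_swap12 p)) in d2.
rewrite -(mean3_swap12 X A X (covers_swap12 p)) in d3.
rewrite -(mean3_swap23 X X A (covers_swap23 p)) in d3.
have invA : (size A)%:R^-1 <= eps.
  by rewrite -[eps]invrK lef_pV2 ?posrE ?invr_gt0 ?ltr0n ?lt0n.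
have invX : (size X)%:R^-1 <= (size A)%:R^-1 :> R.
  by rewrite lef_pV2 ?posrE ?ltr0n ?lt0n // ler_nat.
have sqrt_eps := ler_sqrtr_self (ltW eps_gt0) eps_le1.
move: dA dX d1 d2 d3; rewrite !ler_norml.
move=> /andP [a1 a2] /andP [x1 x2] /andP [e1 e2] /andP [f1 f2] /andP [g1 g2].
apply/andP; split; lra.
Qed.
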